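(* Let $s>0$ be real, and let $n\ge2$ and $r\ge1$ be integers. Let $N=\min(n+r,\,2n-1)$. Then there exist a finite graph $G$ that is a vertex-disjoint union of $r$ cycles (so $\mathrm{FvsNum}(G)=r$) and $n$ agents with additive valuations such that no $s$-separated allocation $(A_1,\dots,A_n)$ satisfies $v_i(A_i)\ge\mathrm{MMS}_i^{N-1,s}$ for every $i\in[n]$. The same holds if zero-valued tree components are added to $G$.
   Context: Cake model: the cake is a finite undirected graph $G$ whose edges are segments of positive length; points of $G$ are its vertices and the points on its edges. A piece of cake is a finite union of intervals contained in edges, together possibly with some vertices. A piece $X$ is connected if any two points of $X$ can be joined by a path in $G$ that stays inside $X$. An additive valuation is a nonatomic measure on the cake. Distances: $\mathrm{Dist}^G(x,y)$ is the length of a shortest path along the edges, and is $\infty$ if $x$ and $y$ lie in different components. For sets, $\mathrm{Dist}^G(X,Y)=\inf_{x\in X,y\in Y}\mathrm{Dist}^G(x,y)$. Separation: a $k$-partition is $s$-separated if it consists of $k$ pairwise disjoint connected pieces $P_1,\dots,P_k$ with $\mathrm{Dist}^G(P_i,P_j)\ge s$ for $i\ne j$. An $s$-separated allocation is a vector of connected pieces satisfying the same condition. Maximin share: $\mathrm{MMS}_i^{k,s}=\sup\min_{j\in[k]}v_i(P_j)$, where the supremum ranges over $s$-separated $k$-partitions. $\mathrm{FvsNum}(G)$ is the minimum number of vertices whose removal from $G$ leaves an acyclic graph. *)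

From mathcomp Require Export all_boot all_order all_algebra.
From mathcomp Require Export all_classical all_reals all_analysis.
From Stdlib Require List.
Set Implicit Arguments. Unset Strict Implicit. Unset Printing Implicit Defensive.
Import Order.TTheory GRing.Theory Num.Theory.
Local Open Scope classical_set_scope.
Local Open Scope ring_scope.

(* The cake: a finite undirected (multi)graph whose edges are segments *)
(* of positive length.  Each edge [e] is parametrised by [t] in       *)
(* [0, glen e]; t = 0 is the vertex [gsrc e], t = glen e is [gtgt e]. *)
Record graph (R : realType) := Graph {
  gV : finType;
  gE : finType;
  gsrc : gE -> gV;
  gtgt : gE -> gV;
  glen : gE -> R;
  glen_pos : forall e, 0 < glen e }.

Section Cake.
Variable R : realType.
Variable G : graph R.

Inductive point := Vtx of gV G | Inn of gE G & R.

(* the point of edge e at parameter t (t is meant to lie in [0, glen e]) *)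
Definition pt (e : gE G) (t : R) : point :=
  if t <= 0 then Vtx (gsrc e)
  else if glen e <= t then Vtx (gtgt e)
  else Inn e t.

Definition is_piece (X : set point) : Prop :=
  exists (I : seq (gE G * interval R)) (W : seq (gV G)),
    (forall eJ, eJ \in I -> forall t, t \in eJ.2 -> 0 <= t <= glen eJ.1) /\
    X = [set x | (exists2 eJ, eJ \in I & exists2 t, t \in eJ.2 & x = pt eJ.1 t)
                 \/ (exists2 w, w \in W & x = Vtx w)].

(* Paths along edges: sequences of segments (e, a, b), traversing edge e
   from parameter a to parameter b, consecutive segments glued at points. *)
Record seg := Seg { sedge : gE G; sfrom : R; sto : R }.

Fixpoint walk (x y : point) (p : seq seg) : Prop :=
  match p with
  | [::] => x = y
  | sg :: p' =>
      [/\ 0 <= sfrom sg <= glen (sedge sg), 0 <= sto sg <= glen (sedge sg),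
          x = pt (sedge sg) (sfrom sg) & walk (pt (sedge sg) (sto sg)) y p']
  end.

Definition inside (X : set point) (p : seq seg) : Prop :=
  forall sg, List.In sg p -> forall t,
    Num.min (sfrom sg) (sto sg) <= t <= Num.max (sfrom sg) (sto sg) ->
    X (pt (sedge sg) t).

Definition plen (p : seq seg) : R := \sum_(sg <- p) `|sto sg - sfrom sg|.

Definition connected_piece (X : set point) : Prop :=
  forall x y, X x -> X y -> exists p, walk x y p /\ inside X p.

(* Dist^G(x, y): length of a shortest path, +oo if none. *)
Definition Dist (x y : point) : \bar R :=
  ereal_inf [set d | exists p, walk x y p /\ d = (plen p)%:E].

Definition DistS (X Y : set point) : \bar R :=
  ereal_inf [set d | exists x y, [/\ X x, Y y & d = Dist x y]].

(* Additive valuation: nonatomic finite measure on the cake, given by a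
   nonatomic Borel measure on each edge parameter interval ]0, glen e[
   (vertices, being single points, carry no mass). *)
Record valuation := Valuation {
  vmu : gE G -> {measure set R -> \bar R};
  vmu_fin : forall e, (vmu e `]0%R, glen e[%classic < +oo)%E;
  vmu_nonatomic : forall e (x : R), vmu e [set x] = 0%E }.

Definition val (v : valuation) (X : set point) : \bar R :=
  (\sum_(e : gE G) vmu v e [set t | (0 < t < glen e)%R /\ X (Inn e t)])%E.

Definition separated (k : nat) (s : R) (P : 'I_k -> set point) : Prop :=
  (forall j, is_piece (P j) /\ connected_piece (P j)) /\
  (forall i j, i != j -> P i `&` P j = set0 /\ (s%:E <= DistS (P i) (P j))%E).

Definition MMS (v : valuation) (k : nat) (s : R) : \bar R :=
  ereal_sup [set m | exists P : 'I_k -> set point,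
     separated s P /\ m = \big[Order.min/+oo%E]_(j < k) val v (P j)].

End Cake.

Arguments Vtx {R G}.
Arguments Inn {R G}.

Definition gsum (R : realType) (G F : graph R) : graph R :=
  @Graph R (gV G + gV F)%type (gE G + gE F)%type
    (fun e => match e with inl e => inl (gsrc e) | inr e => inr (gsrc e) end)
    (fun e => match e with inl e => inl (gtgt e) | inr e => inr (gtgt e) end)
    (fun e => match e with inl e => glen e | inr e => glen e end)
    (fun e => match e with inl e => glen_pos e | inr e => glen_pos e end).

Definition joins (R : realType) (G : graph R) (e : gE G) (x y : gV G) : Prop :=
  (gsrc e = x /\ gtgt e = y) \/ (gsrc e = y /\ gtgt e = x).

(* G is a vertex-disjoint union of r cycles (each cycle simple, of length
   >= 3): the vertex set is partitioned by r cyclic sequences cs, and the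
   edges are exactly one edge between each pair of cyclically consecutive
   vertices. *)
Definition cycle_union (R : realType) (G : graph R) (r : nat) : Prop :=
  exists cs : seq (seq (gV G)),
    [/\ size cs = r,
        all (fun c => 2 < size c)%N cs,
        uniq (flatten cs),
        (forall v, v \in flatten cs) &
        ((forall e, exists2 c, c \in cs & gsrc e \in c /\
                    (gtgt e = next c (gsrc e) \/ gsrc e = next c (gtgt e))) /\
        (forall c x, c \in cs -> x \in c ->
           exists! e, joins e x (next c x)))].

(* acyclic graph (a forest): no cycle, i.e. no cyclic sequence of k+1
   distinct edges through k+1 distinct vertices (k = 0: a loop;
   k = 1: two parallel edges). *)
Definition acyclic (R : realType) (G : graph R) : Prop :=
  forall (k : nat) (es : 'I_k.+1 -> gE G) (vs : 'I_k.+1 -> gV G),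
    injective es -> injective vs ->
    ~ (forall i, joins (es i) (vs i) (vs (ordS i))).

Definition ext_mu (R : realType) (G F : graph R) (v : valuation G)
  (e : gE (gsum G F)) : {measure set R -> \bar R} :=
  match e with inl e => vmu v e | inr _ => mzero end.

Lemma ext_mu_fin (R : realType) (G F : graph R) (v : valuation G) e :
  (@ext_mu R G F v e `]0%R, @glen R (gsum G F) e[%classic < +oo)%E.
Proof. by case: e => [e|e] /=; [exact: vmu_fin | rewrite /mzero]. Qed.

Lemma ext_mu_nonatomic (R : realType) (G F : graph R) (v : valuation G) e (x : R) :
  @ext_mu R G F v e [set x] = 0%E.
Proof. by case: e => [e|e] /=; [exact: vmu_nonatomic | rewrite /mzero]. Qed.

Definition ext_val (R : realType) (G F : graph R) (v : valuation G)
  : valuation (gsum G F) :=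
  @Valuation R (gsum G F) (@ext_mu R G F v) (@ext_mu_fin R G F v)
             (@ext_mu_nonatomic R G F v).

Definition sep_alloc (R : realType) (G : graph R) (n : nat) (s : R)
  (A : 'I_n -> set (point G)) : Prop := separated s A.

From HB Require Import structures.
From mathcomp Require Import ring lra zify.
Set Implicit Arguments. Unset Strict Implicit. Unset Printing Implicit Defensive.
Import Order.TTheory GRing.Theory Num.Theory.
Local Open Scope classical_set_scope.
Local Open Scope ring_scope.

(* Theorem 5.  Let r' = min(r, n-1) and K = n - r' + 1, so that N - 1 = K + 2(r'-1).
   The cake is r cycles C_j of M = 2Kn edges; C_j has a period q_j and a block
   count m_j with M = m_j q_j (q_0 = 2n, m_0 = K; q_j = Kn, m_j = 2 for j >= 1)
   and edges of length ell_j = 4s/(4q_j - 1), so that q_j ell_j - ell_j/4 = s.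
   For j < r', agent i uniformly values the middle quarter of edge a of C_j iff
   a = i mod q_j; nothing else has value.
   - MMS_i > 0: her middles on the edges i + b q_j (b < m_j, j < r') are N - 1
     pieces pairwise at distance >= s, as certified by a 1-Lipschitz potential
     (the circular distance to a point of one cycle).
   - No allocation: every agent must hold a point of one of her middles; two agents
     on the same cycle C_j are more than q_j edges apart, so packing allows at most
     m_j - 1 agents on C_j, in total sum_j (m_j - 1) = n - 1 < n. *)

Section Distances.
Variables (R : realType) (H : graph R).

Lemma pt_src (e : gE H) : pt e 0 = Vtx (gsrc e).
Proof. by rewrite /pt lexx. Qed.

Lemma pt_tgt (e : gE H) : pt e (glen e) = Vtx (gtgt e).
Proof. by rewrite /pt lexx leNgt glen_pos. Qed.

Lemma pt_inner (e : gE H) t : 0 < t -> t < glen e -> pt e t = Inn e t.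
Proof. by move=> t0 tl; rewrite /pt leNgt t0 /= leNgt tl. Qed.

Lemma walk_cat x y z (p p' : seq (seg H)) :
  walk x y p -> walk y z p' -> walk x z (p ++ p').
Proof.
elim: p x => [|sg p IH] x /=; first by move=> ->.
by case=> h1 h2 h3 h4 h5; split => //; apply: IH.
Qed.

Lemma plen_nil : @plen R H [::] = 0.
Proof. by rewrite /plen big_nil. Qed.

Lemma plen_cons sg (p : seq (seg H)) :
  plen (sg :: p) = `|sto sg - sfrom sg| + plen p.
Proof. by rewrite /plen big_cons. Qed.

Lemma plen_cat (p p' : seq (seg H)) : plen (p ++ p') = plen p + plen p'.
Proof. by rewrite /plen big_cat. Qed.

Lemma Dist_le {x y : point H} {p : seq (seg H)} :
  walk x y p -> (Dist x y <= (plen p)%:E)%E.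
Proof. by move=> w; apply: ge_ereal_inf; exists (plen p)%:E => //; exists p. Qed.

Lemma Dist_ge (d : R) (x y : point H) :
  (forall p, walk x y p -> d <= plen p) -> (d%:E <= Dist x y)%E.
Proof. by move=> h; apply: le_ereal_inf_tmp => _ [p [w ->]]; rewrite lee_fin h. Qed.

Lemma DistS_le {X Y : set (point H)} {x y} : X x -> Y y -> (DistS X Y <= Dist x y)%E.
Proof. by move=> hx hy; apply: ge_ereal_inf; exists (Dist x y) => //; exists x, y. Qed.

Lemma DistS_ge (d : R) (X Y : set (point H)) :
  (forall x y, X x -> Y y -> (d%:E <= Dist x y)%E) -> (d%:E <= DistS X Y)%E.
Proof. by move=> h; apply: le_ereal_inf_tmp => _ [x [y [hx hy ->]]]; apply: h. Qed.

Lemma Dist_in_edge (e : gE H) t1 t2 : 0 < t1 < glen e -> 0 < t2 < glen e ->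
  (Dist (Inn e t1) (Inn e t2) <= `|t2 - t1|%:E)%E.
Proof.
move=> /andP[t10 t1l] /andP[t20 t2l].
apply: le_trans (Dist_le (p := [:: Seg e t1 t2]) _) _.
  by split; rewrite /= ?pt_inner ?(ltW t10) ?(ltW t1l) ?(ltW t20) ?(ltW t2l).
by rewrite plen_cons plen_nil addr0.
Qed.

(* A potential that is 1-Lipschitz along every edge bounds the distance from below:
   this is how separation of pieces is certified. *)
Lemma Dist_ge_pot (phi : point H -> R) (x y : point H) :
  (forall e a b, 0 <= a <= glen e -> 0 <= b <= glen e ->
     `|phi (pt e b) - phi (pt e a)| <= `|b - a|) ->
  (`|phi y - phi x|%:E <= Dist x y)%E.
Proof.
move=> lip; apply: Dist_ge => p; elim: p x => [|sg p IH] x /=.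
  by move=> ->; rewrite subrr normr0 plen_nil.
case=> ha hb -> w; rewrite plen_cons [leRHS]addrC.
apply: le_trans (ler_distD (phi (pt (sedge sg) (sto sg))) _ _) _.
exact: lerD (IH _ w) (lip _ _ _ ha hb).
Qed.

Lemma far_disjoint (d : R) (X Y : set (point H)) :
  0 < d -> (d%:E <= DistS X Y)%E -> X `&` Y = set0.
Proof.
move=> d0 far; apply/seteqP; split => // x [Xx Yx].
have := le_trans far (le_trans (DistS_le Xx Yx) (Dist_le (p := [::]) erefl)).
by rewrite plen_nil lee_fin leNgt d0.
Qed.

End Distances.

(* The circular distance from c to u on a circle of circumference L (for u, c in
   [0, L]); it is 1-Lipschitz in u. *)
Definition arc_dist (R : realDomainType) (L c u : R) := Num.min `|u - c| (L - `|u - c|).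

Lemma min_dist_le (R : realDomainType) (a b a' b' d : R) :
  `|a - a'| <= d -> `|b - b'| <= d -> `|Num.min a b - Num.min a' b'| <= d.
Proof.
rewrite !ler_norml => /andP[h1 h2] /andP[h3 h4].
have [hab|hab] := leP a b; have [hab'|hab'] := leP a' b';
  rewrite ?(min_l (ltW _)) ?min_l // ?min_r ?(ltW hab) ?(ltW hab') //;
  apply/andP; split; lra.
Qed.

Lemma arc_dist_lip (R : realDomainType) (L c u u' : R) :
  `|arc_dist L c u - arc_dist L c u'| <= `|u - u'|.
Proof.
have h : `| `|u - c| - `|u' - c| | <= `|u - u'|.
  by apply: le_trans (ler_dist_dist _ _) _; rewrite opprB addrA subrK.
apply: min_dist_le => //.
have -> : L - `|u - c| - (L - `|u' - c|) = - (`|u - c| - `|u' - c|) by ring.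
by rewrite normrN.
Qed.

Section Uniform.
Variables (R : realType) (a b : R).

Definition unif_fun (A : set R) : \bar R := (@lebesgue_measure R) (A `&` `[a, b]).

Let mab : measurable (`[a, b]%classic : set (measurableTypeR R)).
Proof. exact: measurable_itv. Qed.
Let unif0 : unif_fun set0 = 0%E.
Proof. by rewrite /unif_fun set0I measure0. Qed.
Let unif_ge0 A : (0 <= unif_fun A)%E.
Proof. exact: measure_ge0. Qed.
Let unif_ssa : semi_sigma_additive unif_fun.
Proof. exact: (@measure_semi_sigma_additive _ _ _ (mrestr (@lebesgue_measure R) mab)). Qed.
HB.instance Definition _ := isMeasure.Build _ R R unif_fun unif0 unif_ge0 unif_ssa.
Definition unif : {measure set R -> \bar R} := unif_fun.

Lemma unif_full (A : set R) : a <= b -> `[a, b]%classic `<=` A -> unif A = (b - a)%:E.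
Proof.
move=> ab sub; rewrite /= /unif_fun setIidr //.
rewrite lebesgue_measure_itv /= lte_fin.
by case: ltgtP ab => // -> _; rewrite subrr.
Qed.

Lemma unif_witness (A : set R) : unif A <> 0%E -> exists2 t, A t & a <= t <= b.
Proof.
move=> h; apply: contra_notP h => h.
rewrite /= /unif_fun; suff -> : A `&` `[a, b] = set0 by rewrite measure0.
apply/seteqP; split => // t [At]; rewrite /= in_itv /= => tab.
by apply: h; exists t.
Qed.

Lemma unif_set1 x : unif [set x] = 0%E.
Proof.
rewrite /= /unif_fun; apply: (subset_measure0 _ _ (@subIsetl _ _ _)).
- by apply: measurableI => //; exact: measurable_itv.
- exact: measurable_set1.
- exact: lebesgue_measure_set1.
Qed.

End Uniform.

Section CyclicPositions.
Variable M : nat.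
Hypothesis M_gt0 : (0 < M)%N.

Definition fwd (a b : nat) := ((b + M - a) %% M)%N.

Lemma fwd_add a b : (a < M)%N -> (b < M)%N -> ((a + fwd a b) %% M = b)%N.
Proof.
move=> aM bM; rewrite /fwd; case: (leqP a b) => ab.
  have -> : (b + M - a = (b - a) + M)%N by lia.
  rewrite modnDr (@modn_small (b - a)); last by lia.
  by rewrite subnKC // modn_small.
have -> : (b + M - a = M - (a - b))%N by lia.
rewrite (@modn_small (M - (a - b))); last by lia.
have -> : (a + (M - (a - b)) = b + M)%N by lia.
by rewrite modnDr modn_small.
Qed.

Lemma fwd_shift a b u u' : (a < M)%N -> (b < M)%N -> (u' <= u)%N -> (u < M)%N ->
  ((a + u) %% M = (b + u') %% M)%N -> fwd a b = (u - u')%N.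
Proof.
move=> aM bM uu' uM heq.
have hb : (a + (u - u') = b %[mod M])%N.
  by apply/eqP; rewrite -(eqn_modDr u') -addnA subnK //; apply/eqP.
have : (a + fwd a b = a + (u - u') %[mod M])%N by rewrite fwd_add // hb modn_small.
move/eqP; rewrite eqn_modDl !modn_small ?ltn_mod //; last by lia.
by move/eqP.
Qed.

(* Packing: if the points x_i of a cycle of length M = m q (q < M) are pairwise
   more than q steps apart, there are fewer than m of them, since the arcs of
   q + 1 positions starting at the x_i are disjoint. *)
Lemma cyclic_packing (I : finType) (q m : nat) (x : I -> nat) :
  M = (m * q)%N -> (q < M)%N -> (forall i, x i < M)%N ->
  (forall i i', i != i' -> q < fwd (x i) (x i'))%N -> (#|I| < m)%N.
Proof.
move=> Mmq qM xM far.
pose g (iu : I * 'I_q.+1) : 'I_M := Ordinal (ltn_pmod (x iu.1 + iu.2) M_gt0).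
have ginj : injective g.
  suff side (i i' : I) (u u' : 'I_q.+1) : (u' <= u)%N ->
      ((x i + u) %% M = (x i' + u') %% M)%N -> (i, u) = (i', u').
    move=> [i u] [i' u'] /(congr1 (@nat_of_ord M)) /= heq.
    case: (leqP u' u) => uu; first exact: side.
    by apply/esym/side => //; apply: ltnW.
  move=> uu' heq; have uM : (u < M)%N by apply: leq_ltn_trans qM; rewrite -ltnS.
  case: (eqVneq i i') heq => [<-|ii'] heq.
    have := fwd_shift (xM i) (xM i) uu' uM heq.
    rewrite /fwd addKn modnn => /esym/eqP; rewrite subn_eq0 => u'u.
    by congr pair; apply/val_inj/eqP; rewrite eqn_leq u'u uu'.
  have := far _ _ ii'; rewrite (fwd_shift (xM i) (xM i') uu' uM heq) ltnNge.
  by rewrite (leq_trans (leq_subr _ _)) // -ltnS.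
have := leq_card g ginj; rewrite card_prod !card_ord Mmq; nia.
Qed.

End CyclicPositions.

Lemma ordSS_neq m (a : 'I_m) : (2 < m)%N -> ordS (ordS a) != a.
Proof.
move=> m3; apply/eqP => /(congr1 (@nat_of_ord _)) /=; have aM := ltn_ord a.
have [lt|ge] := ltnP a.+1 m.
  rewrite (modn_small lt).
  have [lt2|ge2] := ltnP a.+2 m; first by rewrite modn_small //; lia.
  have -> : (a.+2 = (a.+2 - m) + m)%N by lia.
  by rewrite modnDr modn_small; lia.
have -> : (a.+1 = m)%N by lia.
by rewrite modnn modn_small; lia.
Qed.

Lemma next_enum m (a : 'I_m.+1) : next (enum 'I_m.+1) a = ordS a.
Proof.
apply: val_inj => /=.
rewrite next_nth mem_enum index_enum_ord enum_ordSl /=.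
have hsz : size (map (lift ord0) (enum 'I_m)) = m by rewrite size_map size_enum_ord.
have [lt|ge] := ltnP a m.
  have -> : nth ord0 [seq lift ord0 i | i <- enum 'I_m] a
          = nth ord0 (enum 'I_m.+1) a.+1 by rewrite enum_ordSl.
  by rewrite nth_enum_ord // modn_small.
rewrite nth_default ?hsz //.
have -> : a = m :> nat by have := ltn_ord a; lia.
by rewrite modnn.
Qed.

Section Construction.
Variables (R : realType) (s : R) (n r : nat).
Hypotheses (s_gt0 : 0 < s) (n_ge2 : (2 <= n)%N) (r_ge1 : (1 <= r)%N).

(* r' = min(r, n-1): the cycles C_0, ..., C_{r'-1} carry value *)
Definition rv := minn r n.-1.
(* K = n - r' + 1: the number of MMS pieces on C_0 *)
Definition kb := (n - rv + 1)%N.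
(* M = 2Kn: the number of edges of every cycle *)
Definition csize := (2 * kb * n)%N.
(* the period q_j and the block count m_j of cycle j, with M = m_j q_j *)
Definition per (j : nat) := if j == 0%N then (2 * n)%N else (kb * n)%N.
Definition blk (j : nat) := if j == 0%N then kb else 2%N.
Definition ell (j : nat) : R := 4 * s / (4 * (per j)%:R - 1).
Definition clen (j : nat) : R := csize%:R * ell j.
Definition lo (j : nat) : R := 3 * ell j / 8.
Definition hi (j : nat) : R := 5 * ell j / 8.

Definition agent_mu (i j a : nat) : {measure set R -> \bar R} :=
  if (j < rv)%N && ((a %% per j)%N == i) then unif (lo j) (hi j) else mzero.

Lemma rv_ge1 : (1 <= rv)%N.
Proof. by rewrite /rv leq_min r_ge1 -ltnS prednK // ltnW. Qed.

Lemma rv_le : (rv <= r)%N /\ (rv <= n.-1)%N.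
Proof. by rewrite /rv geq_minl geq_minr. Qed.

Lemma kb_ge2 : (2 <= kb)%N.
Proof. have [_ h] := rv_le; rewrite /kb; lia. Qed.

Lemma csize_eq j : csize = (blk j * per j)%N.
Proof. by rewrite /csize /blk /per; case: eqP => _; ring. Qed.

Lemma per_ge j : (n <= per j)%N.
Proof. have := kb_ge2; rewrite /per; case: eqP => _ h; nia. Qed.

Lemma per_lt_csize j : (per j < csize)%N.
Proof. have := per_ge j; rewrite (csize_eq j) /blk; have := kb_ge2; case: eqP => _; nia. Qed.

Lemma csize_gt0 : (0 < csize)%N.
Proof. exact: leq_ltn_trans (per_lt_csize 0). Qed.

Lemma sum_blk : (\sum_(j < rv) (blk j).-1 = n.-1)%N.
Proof.
have [_ h2] := rv_le; rewrite -(prednK rv_ge1) big_ord_recl /= /blk /=.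
under eq_bigr do rewrite /bump /=.
by rewrite sum_nat_const card_ord /kb muln1; have := rv_ge1; lia.
Qed.

Lemma per_ge2 j : (2 : R) <= (per j)%:R.
Proof. by rewrite (ler_nat R 2); apply: leq_trans n_ge2 (per_ge j). Qed.

Lemma ell_gt0 j : 0 < ell j.
Proof. have := per_ge2 j; have := s_gt0; rewrite /ell => hs h; apply: divr_gt0; lra. Qed.

(* the separation s equals q_j edges minus a quarter edge *)
Lemma s_ell j : 4 * s = (4 * (per j)%:R - 1) * ell j.
Proof. have := per_ge2 j => h; rewrite /ell; field; apply/eqP; lra. Qed.

Lemma lohi j : 0 < lo j /\ lo j <= hi j /\ hi j < ell j.
Proof. have := ell_gt0 j; rewrite /lo /hi => h; split; [|split]; lra. Qed.

Lemma agent_mu_fin (i j a : nat) : (agent_mu i j a `]0%R, ell j[%classic < +oo)%E.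
Proof.
rewrite /agent_mu; case: ifP => _; last exact: ltry.
have [h1 [h2 h3]] := lohi j.
rewrite unif_full //; first exact: ltry.
by move=> t /=; rewrite !in_itv /= => /andP[? ?]; apply/andP; split; lra.
Qed.

Lemma agent_mu_set1 (i j a : nat) (x : R) : agent_mu i j a [set x] = 0%E.
Proof. by rewrite /agent_mu; case: ifP => _; [exact: unif_set1|]. Qed.

(* The MMS partition of agent i: piece p < N-1 is the middle of edge
   pedge i p = i + pblk p * q_j of cycle j = pcyc p. *)
Definition npc := (minn (n + r) (2 * n - 1)).-1.
Definition pcyc (p : nat) := if (p < kb)%N then 0%N else ((p - kb) %/ 2).+1.
Definition pblk (p : nat) := if (p < kb)%N then p else ((p - kb) %% 2)%N.
Definition pedge (i p : nat) := (i + pblk p * per (pcyc p))%N.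

Lemma npc_eq : npc = (kb + 2 * (rv - 1))%N.
Proof. have := rv_le; have := rv_ge1; rewrite /npc /kb /rv -!subn1; lia. Qed.

Lemma pcyc_lt p : (p < npc)%N -> (pcyc p < rv)%N.
Proof.
rewrite npc_eq /pcyc => h; have := rv_ge1; case: ifP => // hp _.
have : ((p - kb) %/ 2 < rv - 1)%N by rewrite ltn_divLR //; lia.
lia.
Qed.

Lemma pblk_lt p : (pblk p < blk (pcyc p))%N.
Proof. by rewrite /pblk /pcyc /blk; case: ifP => // _; rewrite ltn_mod. Qed.

Lemma pedge_lt (i : 'I_n) p : (pedge i p < csize)%N.
Proof.
have := pblk_lt p; have := per_ge (pcyc p); rewrite /pedge (csize_eq (pcyc p)).
have := ltn_ord i; move: (pblk p) (per _) (blk _) => b q m; nia.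
Qed.

Lemma pedge_mod (i : 'I_n) p : ((pedge i p) %% per (pcyc p) = i)%N.
Proof. by rewrite /pedge addnC modnMDl modn_small // (leq_trans _ (per_ge _)). Qed.

Lemma pcyc_pblk_inj p p' : pcyc p = pcyc p' -> pblk p = pblk p' -> p = p'.
Proof.
rewrite /pcyc /pblk; case: ifP => h1; case: ifP => h2 //= [e1] e2.
have := divn_eq (p - kb) 2; have := divn_eq (p' - kb) 2; rewrite e1 e2; lia.
Qed.

Lemma pedge_far (i : 'I_n) p p' : p != p' -> pcyc p = pcyc p' ->
  (per (pcyc p))%:R <= `|((pedge i p')%:R : R) - (pedge i p)%:R|
    <= csize%:R - (per (pcyc p))%:R.
Proof.
move=> hne hj; set q := per (pcyc p).
have hb : pblk p != pblk p'.
  by apply: contra hne => /eqP hb; apply/eqP; exact: pcyc_pblk_inj hj hb.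
have -> : ((pedge i p')%:R : R) - (pedge i p)%:R = ((pblk p')%:R - (pblk p)%:R) * q%:R.
  by rewrite /pedge -hj !natrD !natrM; ring.
have q_gt0 : (0 : R) < q%:R by have := per_ge2 (pcyc p); lra.
have bm := pblk_lt p; have b'm := pblk_lt p'; rewrite -hj in b'm.
rewrite (csize_eq (pcyc p)) natrM -/q normrM (gtr0_norm q_gt0).
move: hb bm b'm; set b := pblk p; set b' := pblk p'; set m := blk _ => hb bm b'm.
have [bb'|b'b] : (b < b')%N \/ (b' < b)%N by move: hb; case: ltngtP => //; auto.
- have h1 : (b%:R : R) + 1 <= b'%:R by rewrite natr1 ler_nat.
  have h2 : (b'%:R : R) + 1 <= m%:R by rewrite natr1 ler_nat.
  have e1 : (1 : R) * q%:R <= (b'%:R - b%:R) * q%:R by rewrite ler_pM2r //; lra.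
  have e2 : ((b'%:R : R) - b%:R) * q%:R <= (m%:R - 1) * q%:R.
    by rewrite ler_pM2r //; have : (0 : R) <= b%:R by []; lra.
  by rewrite ger0_norm; [apply/andP; split; lra|lra].
- have h1 : (b'%:R : R) + 1 <= b%:R by rewrite natr1 ler_nat.
  have h2 : (b%:R : R) + 1 <= m%:R by rewrite natr1 ler_nat.
  have e1 : (1 : R) * q%:R <= (b%:R - b'%:R) * q%:R by rewrite ler_pM2r //; lra.
  have e2 : ((b%:R : R) - b'%:R) * q%:R <= (m%:R - 1) * q%:R.
    by rewrite ler_pM2r //; have : (0 : R) <= b'%:R by []; lra.
  by rewrite ler0_norm; [apply/andP; split; lra|lra].
Qed.

(* A graph H containing a labelled copy of the r cycles: lab_e e = Some (j, a)
   says that e is edge a of cycle j, running from vertex a to vertex a + 1 (mod M)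
   of that cycle, and edge_at j a is that edge; unlabelled edges only touch
   unlabelled vertices. *)
Section LabelledCycles.
Variable H : graph R.
Variables (lab_e : gE H -> option (nat * nat)) (lab_v : gV H -> option (nat * nat))
  (edge_at : nat -> nat -> gE H).
Hypotheses
  (lab_src : forall {e j a}, lab_e e = Some (j, a) -> lab_v (gsrc e) = Some (j, a))
  (lab_tgt : forall {e j a}, lab_e e = Some (j, a) ->
     lab_v (gtgt e) = Some (j, (a.+1 %% csize)%N))
  (lab_len : forall {e j a}, lab_e e = Some (j, a) -> glen e = ell j)
  (lab_rng : forall {e j a}, lab_e e = Some (j, a) -> (j < r)%N /\ (a < csize)%N)
  (lab_none : forall {e}, lab_e e = None ->
     lab_v (gsrc e) = None /\ lab_v (gtgt e) = None)
  (edge_atP : forall {j a}, (j < r)%N -> (a < csize)%N ->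
     lab_e (edge_at j a) = Some (j, a))
  (lab_e_inj : forall {e e' x}, lab_e e = Some x -> lab_e e' = Some x -> e = e')
  (lab_v_inj : forall {v v' x}, lab_v v = Some x -> lab_v v' = Some x -> v = v').

Definition pot (j0 : nat) (c : R) (x : point H) : R :=
  match x with
  | Vtx v => if lab_v v is Some (j, a) then
               (if j == j0 then arc_dist (clen j0) c (a%:R * ell j0) else clen j0 + s)
             else clen j0 + s
  | Inn e t => if lab_e e is Some (j, a) then
               (if j == j0 then arc_dist (clen j0) c (a%:R * ell j0 + t) else clen j0 + s)
             else clen j0 + s
  end.

Lemma pot_pt {j0 c e j a t} : 0 <= c <= clen j0 -> lab_e e = Some (j, a) ->
  0 <= t <= glen e -> pot j0 c (pt e t) =
  if j == j0 then arc_dist (clen j0) c (a%:R * ell j0 + t) else clen j0 + s.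
Proof.
move=> /andP[c0 cL] he /andP[t0 tl]; rewrite /pt.
case: ifP => [t0'|_].
  have -> : t = 0 by apply/le_anti; rewrite t0 t0'.
  by rewrite /= (lab_src he) addr0.
case: ifP => [tl'|_] /=; last by rewrite he.
have -> : t = ell j by apply/le_anti; rewrite -(lab_len he) tl tl'.
rewrite (lab_tgt he); case: eqP => // ->.
have [_ aM] := lab_rng he.
have [lt|eq] : (a.+1 < csize)%N \/ a.+1 = csize by lia.
  by rewrite modn_small // -addn1 natrD mulrDl mul1r.
(* the last edge closes the cycle: arc length clen j0 is arc length 0 *)
rewrite eq modnn mul0r.
have -> : a%:R * ell j0 + ell j0 = clen j0 by rewrite /clen -eq -addn1 natrD mulrDl mul1r.
rewrite /arc_dist sub0r normrN !ger0_norm // ?subr_ge0 //.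
have -> : clen j0 - (clen j0 - c) = c by ring.
by rewrite minC.
Qed.

Lemma pot_pt_none {j0 c e t} : lab_e e = None -> pot j0 c (pt e t) = clen j0 + s.
Proof.
move=> he; have [h1 h2] := lab_none he; rewrite /pt.
case: ifP => _; first by rewrite /= h1.
by case: ifP => _ /=; rewrite ?h2 ?he.
Qed.

Lemma pot_Dist j0 c x y : 0 <= c <= clen j0 ->
  (`|pot j0 c y - pot j0 c x|%:E <= Dist x y)%E.
Proof.
move=> hc; apply: Dist_ge_pot => e t t' ht ht'.
case he : (lab_e e) => [[j a]|]; last by rewrite !pot_pt_none // subrr normr0.
rewrite !(pot_pt hc he) //; case: eqP => _; last by rewrite subrr normr0.
apply: le_trans (arc_dist_lip _ _ _ _) _.
by have -> : a%:R * ell j0 + t' - (a%:R * ell j0 + t) = t' - t by ring.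
Qed.

Lemma cycle_walk d e j a : lab_e e = Some (j, a) ->
  exists e' (p : seq (seg H)), [/\ lab_e e' = Some (j, ((a + d.+1) %% csize)%N),
    walk (Vtx (gtgt e)) (Vtx (gsrc e')) p & plen p = d%:R * ell j].
Proof.
move=> he; have [jr aM] := lab_rng he.
have next_edge k : lab_e (edge_at j ((a + k) %% csize)) = Some (j, ((a + k) %% csize)%N).
  by apply: edge_atP; rewrite ?ltn_mod ?csize_gt0.
elim: d => [|d [e'' [p'' [he'' w'' pl'']]]].
  exists (edge_at j ((a + 1) %% csize)), [::]; split; rewrite ?plen_nil ?mul0r //.
  by congr Vtx; apply: (lab_v_inj (lab_tgt he)); rewrite (lab_src (next_edge 1%N)) addn1.
exists (edge_at j ((a + d.+2) %% csize)), (p'' ++ [:: Seg e'' 0 (glen e'')]); split => //.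
- apply: walk_cat w'' _; have l0 := ltW (glen_pos e'').
  split; rewrite /= ?lexx ?l0 ?pt_src //= pt_tgt; congr Vtx.
  apply: (lab_v_inj (lab_tgt he'')); rewrite (lab_src (next_edge _)).
  by rewrite -[((a + d.+1) %% csize).+1]addn1 modnDml -addnA addn1.
- rewrite plen_cat pl'' plen_cons plen_nil addr0 subr0 (lab_len he'').
  by rewrite ger0_norm ?(ltW (ell_gt0 _)) // -addn1 natrD mulrDl mul1r.
Qed.

(* from inside edge a of C_j to inside edge a + d + 1: to the end of the first
   edge, d full edges, then into the last one *)
Lemma Dist_along_cycle e1 e2 j a d t1 t2 :
  lab_e e1 = Some (j, a) -> lab_e e2 = Some (j, ((a + d.+1) %% csize)%N) ->
  0 < t1 < ell j -> 0 < t2 < ell j ->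
  (Dist (Inn e1 t1) (Inn e2 t2) <= (ell j - t1 + d%:R * ell j + t2)%:E)%E.
Proof.
move=> he1 he2 /andP[t10 t1l] /andP[t20 t2l].
have [e' [p [he' w pl]]] := cycle_walk d he1; have <- := lab_e_inj he' he2.
have l1 := lab_len he1; have l2 := lab_len he'.
apply: le_trans
  (Dist_le (p := Seg e1 t1 (glen e1) :: (p ++ [:: Seg e' 0 t2])) _) _.
  split => /=; rewrite ?l1 ?lexx ?andbT ?(ltW t10) ?(ltW t1l) ?(ltW (ell_gt0 j)) //.
    by rewrite pt_inner ?l1.
  rewrite -l1 pt_tgt; apply: walk_cat w _; split => /=.
  - by rewrite lexx l2 ltW // ell_gt0.
  - by rewrite l2 ltW // ltW.
  - by rewrite pt_src.
  - by rewrite pt_inner ?l2.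
rewrite plen_cons plen_cat pl plen_cons plen_nil addr0 subr0 l1 /= lee_fin.
by rewrite !ger0_norm ?subr_ge0 ?addrA ?(ltW t1l) ?(ltW t20).
Qed.

Lemma middles_close e1 e2 j a1 a2 t1 t2 :
  lab_e e1 = Some (j, a1) -> lab_e e2 = Some (j, a2) ->
  lo j <= t1 <= hi j -> lo j <= t2 <= hi j -> (fwd csize a1 a2 < per j)%N ->
  (Dist (Inn e1 t1) (Inn e2 t2) < s%:E)%E.
Proof.
move=> he1 he2 /andP[t1l t1h] /andP[t2l t2h] hD.
have lp := ell_gt0 j; have se := s_ell j; have qge := per_ge2 j; have := s_gt0.
have s7 : 7 * ell j <= 4 * s by rewrite se ler_pM2r //; lra.
have [_ a1M] := lab_rng he1; have [_ a2M] := lab_rng he2.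
move: t1l t1h t2l t2h; rewrite /lo /hi => t1l t1h t2l t2h s0.
have t1i : 0 < t1 < ell j by apply/andP; split; lra.
have t2i : 0 < t2 < ell j by apply/andP; split; lra.
have hDa := fwd_add csize_gt0 a1M a2M; set D := fwd csize a1 a2 in hD hDa.
have [D0|D0] := posnP D.
  have ee : e2 = e1 by apply: (lab_e_inj he2); rewrite he1 -hDa D0 addn0 modn_small.
  have := @Dist_in_edge _ _ e1 t1 t2; rewrite (lab_len he1) => /(_ t1i t2i) hd.
  subst e2; apply: le_lt_trans hd _; rewrite lte_fin.
  have : `|t2 - t1| <= ell j / 4 by rewrite ler_norml; apply/andP; split; lra.
  lra.
have he2' : lab_e e2 = Some (j, ((a1 + D.-1.+1) %% csize)%N) by rewrite prednK // hDa.
apply: le_lt_trans (Dist_along_cycle he1 he2' t1i t2i) _.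
have : (D.-1%:R : R) * ell j <= ((per j)%:R - 2) * ell j.
  rewrite ler_pM2r //; move: hD; rewrite -(prednK D0) -(ler_nat R) -!natr1 => h.
  lra.
by rewrite lte_fin; lra.
Qed.

Definition middle (e : gE H) (j : nat) : set (point H) :=
  [set x | exists2 t, lo j <= t <= hi j & x = pt e t].

Lemma middle_is_piece e j a : lab_e e = Some (j, a) -> is_piece (middle e j).
Proof.
move=> he; exists [:: (e, `[lo j, hi j])], [::]; split.
  move=> eJ; rewrite mem_seq1 => /eqP -> t; rewrite in_itv /= (lab_len he).
  by have [? [? ?]] := lohi j; case/andP => ? ?; apply/andP; split; lra.
apply/seteqP; split => x.
  case=> t ht ->; left; exists (e, `[lo j, hi j]); first by rewrite mem_seq1.
  by exists t; rewrite ?in_itv.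
case=> [[eJ]|[w]]; last by rewrite in_nil.
by rewrite mem_seq1 => /eqP -> [t]; rewrite in_itv /= => ht ->; exists t.
Qed.

Lemma middle_connected e j a : lab_e e = Some (j, a) -> connected_piece (middle e j).
Proof.
move=> he x y [t1 /andP[l1 h1] ->] [t2 /andP[l2 h2] ->].
have [ql [qlh qh]] := lohi j.
exists [:: Seg e t1 t2]; split.
  by split => //=; rewrite (lab_len he); apply/andP; split; lra.
move=> sg [] // <- t /= /andP[ht1 ht2]; exists t => //; apply/andP; split.
  by apply: le_trans ht1; rewrite le_min l1 l2.
by apply: le_trans ht2 _; rewrite ge_max h1 h2.
Qed.

(* the arc length of the midpoint of edge a of cycle j, where the potentials
   separating middles are centred *)
Definition mid_center (j a : nat) : R := a%:R * ell j + ell j / 2.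

Lemma mid_center_in j a : (a < csize)%N -> 0 <= mid_center j a <= clen j.
Proof.
move=> aM; have lp := ell_gt0 j; rewrite /mid_center /clen.
have : (a%:R + 1) * ell j <= csize%:R * ell j by rewrite ler_pM2r // natr1 ler_nat.
have : (0 : R) <= a%:R * ell j by rewrite mulr_ge0 // ltW.
move=> ? ?; apply/andP; split; lra.
Qed.

Lemma pot_mid_self e j a t : lab_e e = Some (j, a) -> lo j <= t <= hi j ->
  pot j (mid_center j a) (pt e t) <= ell j / 8.
Proof.
move=> he /andP[tl th]; have [_ aM] := lab_rng he; have [l0 _] := lohi j.
rewrite (pot_pt (mid_center_in j aM) he) ?eqxx; last first.
  by rewrite (lab_len he); apply/andP; split; move: l0 tl th; rewrite /lo /hi; lra.
rewrite /arc_dist ge_min; apply/orP; left.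
have -> : a%:R * ell j + t - mid_center j a = t - ell j / 2 by rewrite /mid_center; ring.
by rewrite ler_norml; apply/andP; split; move: tl th; rewrite /lo /hi; lra.
Qed.

Lemma pot_mid_far e j a a' t : lab_e e = Some (j, a') -> (a < csize)%N ->
  (per j)%:R <= `|(a'%:R : R) - a%:R| <= csize%:R - (per j)%:R -> lo j <= t <= hi j ->
  (per j)%:R * ell j - ell j / 8 <= pot j (mid_center j a) (pt e t).
Proof.
move=> he aM /andP[hq1 hq2] /andP[tl th]; have lp := ell_gt0 j.
move: tl th; rewrite /lo /hi => tl th.
rewrite (pot_pt (mid_center_in j aM) he) ?eqxx; last first.
  by rewrite (lab_len he); apply/andP; split; lra.
set d := `|(a'%:R : R) - a%:R|.
have hd : `| `|a'%:R * ell j + t - mid_center j a| - d * ell j | <= ell j / 8.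
  have -> : d * ell j = `|((a'%:R : R) - a%:R) * ell j| by rewrite normrM (gtr0_norm lp).
  apply: le_trans (ler_dist_dist _ _) _.
  have -> : a'%:R * ell j + t - mid_center j a - (a'%:R - a%:R) * ell j = t - ell j / 2.
    by rewrite /mid_center; ring.
  by rewrite ler_norml; apply/andP; split; lra.
move: hd; rewrite ler_norml => /andP[hd1 hd2].
have hh1 : (per j)%:R * ell j <= d * ell j by rewrite ler_pM2r.
have hh2 : d * ell j <= (csize%:R - (per j)%:R) * ell j by rewrite ler_pM2r.
by rewrite /arc_dist le_min /clen; apply/andP; split; lra.
Qed.

Lemma pot_mid_other e j j' a a' t : lab_e e = Some (j', a') -> j' != j ->
  (a < csize)%N -> lo j' <= t <= hi j' -> pot j (mid_center j a) (pt e t) = clen j + s.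
Proof.
move=> he jj' aM /andP[tl th]; have [l0 [_ lh]] := lohi j'.
rewrite (pot_pt (mid_center_in j aM) he) ?(negbTE jj') //.
by rewrite (lab_len he); apply/andP; split; lra.
Qed.

Lemma middles_far e1 e2 j1 a1 j2 a2 :
  lab_e e1 = Some (j1, a1) -> lab_e e2 = Some (j2, a2) ->
  (j1 <> j2 \/ (j1 = j2 /\
     (per j1)%:R <= `|(a2%:R : R) - a1%:R| <= csize%:R - (per j1)%:R)) ->
  (s%:E <= DistS (middle e1 j1) (middle e2 j2))%E.
Proof.
move=> he1 he2 hcase; have [_ a1M] := lab_rng he1.
apply: DistS_ge => x y [t1 ht1 ->] [t2 ht2 ->].
apply: le_trans (pot_Dist _ _ (mid_center_in j1 a1M)); rewrite lee_fin.
have p1 := pot_mid_self he1 ht1; have lp := ell_gt0 j1.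
case: hcase => [jne|[ej hq]]; last subst j2.
  have j21 : j2 != j1 by apply/eqP => h; apply: jne.
  rewrite (pot_mid_other he2 j21 a1M ht2).
  have : ell j1 <= clen j1 by rewrite /clen ler_pMl // (ler_nat R 1) csize_gt0.
  by move: (ler_norm (clen j1 + s - pot j1 (mid_center j1 a1) (pt e1 t1))); lra.
have p2 := pot_mid_far he2 a1M hq ht2; have se := s_ell j1.
by move: (ler_norm (pot j1 (mid_center j1 a1) (pt e2 t2)
                    - pot j1 (mid_center j1 a1) (pt e1 t1))); lra.
Qed.

Variable w : 'I_n -> valuation H.
Hypothesis wE : forall (i : 'I_n) e A,
  vmu (w i) e A = if lab_e e is Some (j, a) then agent_mu i j a A else 0%E.

Lemma middle_val (i : 'I_n) e j a : lab_e e = Some (j, a) -> (j < rv)%N ->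
  (a %% per j)%N = i -> ((ell j / 4)%:E <= val (w i) (middle e j))%E.
Proof.
move=> he hj ha; rewrite /val (bigD1 e) //=.
apply: le_trans (leeDl _ _); last by apply: sume_ge0 => e' _; exact: measure_ge0.
rewrite wE he /agent_mu hj ha eqxx /=.
have [ql [qlh qh]] := lohi j.
rewrite unif_full //; last first.
  move=> t /=; rewrite in_itv /= => /andP[h1 h2]; split.
    by rewrite (lab_len he); apply/andP; split; lra.
  by rewrite -pt_inner ?(lab_len he); [exists t => //; apply/andP|lra|lra].
by rewrite lee_fin /lo /hi; lra.
Qed.

(* The N-1 middles of agent i form an s-separated partition of positive value. *)
Lemma MMS_gt0 (i : 'I_n) : (0 < MMS (w i) npc s)%E.
Proof.
pose E (p : 'I_npc) := edge_at (pcyc p) (pedge i p).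
have hE (p : 'I_npc) : lab_e (E p) = Some (pcyc p, pedge i p).
  apply: edge_atP; last exact: pedge_lt.
  by apply: leq_trans (pcyc_lt (ltn_ord p)) _; have [] := rv_le.
pose P (p : 'I_npc) := middle (E p) (pcyc p).
have sepP : separated s P.
  split => [p|p p' pp'].
    by split; [apply: middle_is_piece (hE p)|apply: middle_connected (hE p)].
  have far : (s%:E <= DistS (P p) (P p'))%E.
    apply: middles_far (hE p) (hE p') _.
    case: (eqVneq (pcyc p) (pcyc p')) => hj; last by left; apply/eqP.
    by right; split => //; apply: pedge_far => //; apply: contra pp' => /eqP/val_inj->.
  by split => //; apply: far_disjoint s_gt0 far.
have pos : (0 < \big[Order.min/+oo%E]_(p < npc) val (w i) (P p))%E.
  apply: (big_ind (fun x => 0 < x)%E) => // [x y hx hy|p _]; first by rewrite lt_min hx hy.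
  apply: lt_le_trans (middle_val (hE p) (pcyc_lt (ltn_ord p)) (pedge_mod i p)).
  by rewrite lte_fin; have := ell_gt0 (pcyc p); lra.
by apply: lt_le_trans pos _; apply: ereal_sup_ubound; exists P.
Qed.

Definition holds_middle (i : nat) (X : set (point H)) (e : gE H) (j a : nat) :=
  [/\ lab_e e = Some (j, a), (j < rv)%N, (a %% per j)%N = i &
      exists2 t, lo j <= t <= hi j & X (Inn e t)].

Lemma valued_middle (i : 'I_n) (X : set (point H)) :
  (0 < val (w i) X)%E -> exists e j a, holds_middle i X e j a.
Proof.
move=> h; apply: contrapT => hno; move: h.
rewrite /val big1 ?ltxx // => e _; rewrite wE.
case he : (lab_e e) => [[j a]|] //; rewrite /agent_mu.
case: ifP => [/andP[hj /eqP ha]|_] //.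
apply: contrapT => /unif_witness[t [_ Xt] ht].
by apply: hno; exists e, j, a; split => //; exists t.
Qed.

Lemma holders_spread (i i' : 'I_n) X X' e e' j a a' : i != i' ->
  (s%:E <= DistS X X')%E -> holds_middle i X e j a -> holds_middle i' X' e' j a' ->
  (per j < fwd csize a a')%N.
Proof.
move=> ii' far [he _ ha [t ht Xt]] [he' _ ha' [t' ht' Xt']].
have [_ aM] := lab_rng he; have [_ a'M] := lab_rng he'.
rewrite ltnNge leq_eqVlt; apply/negP => /orP[/eqP hq|hlt].
  (* exactly q_j edges apart, the two edges would belong to the same agent *)
  have := fwd_add csize_gt0 aM a'M; rewrite hq => hD.
  have : (a' %% per j = a %% per j)%N.
    by rewrite -hD (@modn_dvdm csize) ?modnDr // (csize_eq j) dvdn_mull.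
  by rewrite ha ha' => /val_inj/eqP; rewrite eq_sym (negbTE ii').
have := le_lt_trans (le_trans far (DistS_le Xt Xt')) (middles_close he he' ht ht' hlt).
by rewrite ltxx.
Qed.

(* No s-separated allocation gives every agent her MMS^{N-1,s}: each agent would
   hold one of her middles, at most m_j - 1 agents fit on cycle C_j by packing,
   and sum_j (m_j - 1) = n - 1. *)
Lemma no_alloc : ~ exists A : 'I_n -> set (point H),
  sep_alloc s A /\ forall i, (MMS (w i) npc s <= val (w i) (A i))%E.
Proof.
case=> A [[_ sepA] hA].
have hold (i : 'I_n) : exists x : gE H * nat * nat, holds_middle i (A i) x.1.1 x.1.2 x.2.
  have [e [j [a h]]] := valued_middle (lt_le_trans (MMS_gt0 i) (hA i)).
  by exists (e, j, a).
have [f hf] := boolp.choice hold.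
have hJ i : ((f i).1.2 < rv)%N by case: (hf i).
pose J i : 'I_rv := Ordinal (hJ i).
have per_cycle (j : 'I_rv) : (#|[pred i | J i == j]| < blk j)%N.
  rewrite -card_sig; pose x (i : {i | J i == j}) := (f (sval i)).2.
  apply: (cyclic_packing csize_gt0 (x := x) (csize_eq j) (per_lt_csize j)).
    by move=> i; have [he _ _ _] := hf (sval i); have [] := lab_rng he.
  move=> [i hi] [i' hi'] ne; have ii' : i != i'.
    by apply: contra ne => /eqP ii'; apply/eqP/val_inj.
  have ji : (f i).1.2 = j := congr1 (@nat_of_ord _) (eqP hi).
  have ji' : (f i').1.2 = j := congr1 (@nat_of_ord _) (eqP hi').
  have := hf i; have := hf i'; rewrite /x /= ji ji' => hold_i' hold_i.
  exact: holders_spread ii' (sepA i i' ii').2 hold_i hold_i'.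
have : (n <= n.-1)%N.
  rewrite -sum_blk -[X in (X <= _)%N](card_ord n) -sum1_card (partition_big J predT) //=.
  apply: leq_sum => j _.
  by rewrite sum1_card -ltnS (leq_trans (per_cycle j)) // leqSpred.
by have := n_ge2; lia.
Qed.

End LabelledCycles.

(* The concrete cake: r cycles of M edges, vertex (j, a) and edge (j, a) joining
   (j, a) to (j, a + 1 mod M), all edges of cycle j of length ell j.  Indices are
   typed 'I_r.-1.+1 and 'I_cmax.+1 so that inord can build them. *)
Lemma rE : r.-1.+1 = r. Proof. by rewrite prednK. Qed.
Definition cmax := csize.-1.
Lemma cmaxE : cmax.+1 = csize. Proof. by rewrite prednK // csize_gt0. Qed.

Definition cyc_pos := ('I_r.-1.+1 * 'I_cmax.+1)%type.

Definition cycles_graph : graph R :=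
  @Graph R cyc_pos cyc_pos (fun e => e) (fun e => (e.1, ordS e.2))
    (fun e => ell e.1) (fun e => ell_gt0 e.1).

Definition agent_val (i : 'I_n) : valuation cycles_graph :=
  @Valuation R cycles_graph (fun e => agent_mu i e.1 e.2)
    (fun e => agent_mu_fin i e.1 e.2) (fun e x => agent_mu_set1 i e.1 e.2 x).

(* cycles have at least three edges, so they are simple cycles *)
Lemma csize_gt2 : (2 < csize)%N.
Proof. have := kb_ge2; rewrite /csize; nia. Qed.

Lemma cycle_union_cycles : cycle_union cycles_graph r.
Proof.
pose cyc (j : 'I_r.-1.+1) := [seq ((j, a) : gV cycles_graph) | a <- enum 'I_cmax.+1].
have cyc_next j a : next (cyc j) (j, a) = (j, ordS a).
  by rewrite (next_map (h := fun b => (j, b))) ?enum_uniq ?next_enum // => b1 b2 [].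
exists [seq cyc j | j <- enum 'I_r.-1.+1]; split.
- by rewrite size_map size_enum_ord rE.
- by apply/allP => c /mapP[j _ ->]; rewrite size_map size_enum_ord cmaxE csize_gt2.
- apply: allpairs_uniq; rewrite ?enum_uniq //.
  by move=> [x1 y1] [x2 y2] _ _ /= [-> ->].
- by move=> [j a]; apply/allpairsP; exists (j, a); rewrite !mem_enum.
split.
  move=> [j a]; exists (cyc j); first by apply: map_f; rewrite mem_enum.
  split; first by apply: (map_f (fun b => (j, b))); rewrite mem_enum.
  by left; rewrite cyc_next.
move=> c x /mapP[j _ ->] /mapP[a _ ->]; rewrite cyc_next.
exists (j, a); split; first by left.
move=> e' [[/= -> _] //|[/= he1 he2]].
have m3 : (2 < cmax.+1)%N by rewrite cmaxE csize_gt2.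
by move: he2; rewrite he1 /= => [[]] /eqP; rewrite (negbTE (ordSS_neq a m3)).
Qed.

Definition lab_cyc (x : cyc_pos) : option (nat * nat) := Some (nat_of_ord x.1, nat_of_ord x.2).
Definition edge_cyc (j a : nat) : cyc_pos := (inord j, inord a).

Lemma no_alloc_cycles : ~ exists A : 'I_n -> set (point cycles_graph),
  sep_alloc s A /\ forall i, (MMS (agent_val i) npc s <= val (agent_val i) (A i))%E.
Proof.
apply: (@no_alloc cycles_graph lab_cyc lab_cyc edge_cyc).
- by [].
- by move=> [e1 e2] j a /= [<- <-]; rewrite -cmaxE.
- by move=> [e1 e2] j a /= [<- _].
- by move=> [e1 e2] j a /= [<- <-]; rewrite -cmaxE (leq_trans (ltn_ord _) (eq_leq rE)).
- by [].
- by move=> j a hj ha; rewrite /lab_cyc /= !inordK ?cmaxE ?rE.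
- by move=> [e1 e2] [e1' e2'] x /= <- [h1 h2]; congr (_, _); apply: val_inj.
- by move=> [e1 e2] [e1' e2'] x /= <- [h1 h2]; congr (_, _); apply: val_inj.
- by [].
Qed.

Lemma no_alloc_extended (F : graph R) : ~ exists A : 'I_n -> set (point (gsum cycles_graph F)),
  sep_alloc s A /\ forall i, (MMS (ext_val F (agent_val i)) npc s
                              <= val (ext_val F (agent_val i)) (A i))%E.
Proof.
apply: (@no_alloc (gsum cycles_graph F)
   (fun e => if e is inl e then lab_cyc e else None)
   (fun v => if v is inl v then lab_cyc v else None)
   (fun j a => inl (edge_cyc j a))).
- by move=> [e|e] j a.
- by move=> [[e1 e2]|e] j a //= [<- <-]; rewrite -cmaxE.
- by move=> [[e1 e2]|e] j a //= [<- _].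
- by move=> [[e1 e2]|e] j a //= [<- <-]; rewrite -cmaxE (leq_trans (ltn_ord _) (eq_leq rE)).
- by move=> [e|e].
- by move=> j a hj ha; rewrite /lab_cyc /= !inordK ?cmaxE ?rE.
- by move=> [[e1 e2]|e] [[e1' e2']|e'] x //= <- [h1 h2]; congr (inl (_, _)); apply: val_inj.
- by move=> [[e1 e2]|e] [[e1' e2']|e'] x //= <- [h1 h2]; congr (inl (_, _)); apply: val_inj.
- by move=> i [e|e] A.
Qed.

End Construction.

Theorem theorem5 (R : realType) (s : R) (n r : nat) :
  0 < s -> (2 <= n)%N -> (1 <= r)%N ->
  exists (G : graph R) (v : 'I_n -> valuation G),
    cycle_union G r /\
    (~ exists A : 'I_n -> set (point G),
         sep_alloc s A /\
         forall i, (MMS (v i) (minn (n + r) (2 * n - 1)).-1 s <= val (v i) (A i))%E) /\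
    (forall F : graph R, acyclic F ->
       ~ exists A : 'I_n -> set (point (gsum G F)),
           sep_alloc s A /\
           forall i, (MMS (ext_val F (v i)) (minn (n + r) (2 * n - 1)).-1 s
                       <= val (ext_val F (v i)) (A i))%E).
Proof.
move=> s_gt0 n_ge2 r_ge1.
exists (cycles_graph s_gt0 n_ge2 r_ge1), (agent_val s_gt0 n_ge2 r_ge1).
split; first exact: cycle_union_cycles.
split; first exact: no_alloc_cycles.
by move=> F _; exact: no_alloc_extended.
Qed.
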